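(* Let $F$ be an infinite field, $G$ a group, and $(g_1,\dots,g_n)\in G^n$ with pairwise distinct entries. Give $M_n(F)$ the elementary $G$-grading induced by $(g_1,\dots,g_n)$ and let $B$ be a subalgebra of $M_n(F)$ spanned by a set of matrix units, with the induced grading. If a monomial $x_{h_1}^{(i_1)}\cdots x_{h_p}^{(i_p)}$ in $F\langle X|G\rangle$ is a graded identity of $B$, then it lies in the $T_G$-ideal generated by some monomial in $T_G(B)$ of length at most $2n-1$.
   Context: The elementary grading on $M_n(F)$ induced by $(g_1,\dots,g_n)$: the homogeneous component of degree $g$ is spanned by the matrix units $e_{ij}$ with $g_i^{-1}g_j=g$; $B$ has the grading $B_g=B\cap M_n(F)_g$. $F\langle X|G\rangle$ is the free associative algebra on disjoint countable sets of variables $X_g=\{x_g^{(1)},x_g^{(2)},\dots\}$, $g\in G$, with $x_g^{(i)}$ of degree $g$. $T_G(B)$ is the set of graded polynomial identities of $B$ (polynomials vanishing whenever each variable $x_g^{(i)}$ is replaced by an element of $B_g$); a $T_G$-ideal is an ideal invariant under all degree-preserving endomorphisms of $F\langle X|G\rangle$. *)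

From HB Require Import structures.
From mathcomp Require Import all_boot all_algebra finmap.
From mathcomp Require Import monalg.

Set Implicit Arguments.
Unset Strict Implicit.
Unset Printing Implicit Defensive.

Import GRing.Theory.
Local Open Scope ring_scope.

(* Graded variables x_g^(i) are represented by pairs (g, i) : G * nat. *)
Definition gvar (G : groupType) := (G * nat)%type.

Definition gword (G : groupType) := {fmonom gvar G}.

Definition FreeAlg (F : fieldType) (G : groupType) := {malg F[gword G]}.

Definition monomial (F : fieldType) (G : groupType) (w : gword G) : FreeAlg F G :=
  << w >>.

Definition word_deg (G : groupType) (w : gword G) : G :=
  foldr (fun v acc => (v.1 * acc)%g) 1%g (w : seq (gvar G)).

(* Homogeneous elements of degree g of F<X|G> (0 is homogeneous of any degree). *)
Definition homogeneous (F : fieldType) (G : groupType) (p : FreeAlg F G) (g : G) :=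
  forall w : gword G, w \in msupp p -> word_deg w = g.

Definition graded_endo (F : fieldType) (G : groupType) (phi : FreeAlg F G -> FreeAlg F G) :=
  [/\ forall (a : F) (p q : FreeAlg F G), phi (a *: p + q) = a *: phi p + phi q,
      forall p q : FreeAlg F G, phi (p * q) = phi p * phi q,
      phi 1 = 1 &
      forall (p : FreeAlg F G) (g : G), homogeneous p g -> homogeneous (phi p) g].

Definition is_ideal (F : fieldType) (G : groupType) (I : FreeAlg F G -> Prop) :=
  [/\ I 0,
      forall p q, I p -> I q -> I (p + q),
      forall (a : F) p, I p -> I (a *: p) &
      forall p q r, I q -> I (p * q * r)].

Definition is_TG_ideal (F : fieldType) (G : groupType) (I : FreeAlg F G -> Prop) :=
  is_ideal I /\ forall phi, graded_endo phi -> forall p, I p -> I (phi p).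

Definition in_TG_ideal_gen (F : fieldType) (G : groupType)
    (S : FreeAlg F G -> Prop) (p : FreeAlg F G) :=
  forall I, is_TG_ideal I -> (forall q, S q -> I q) -> I p.

Definition elem_homog (F : fieldType) (G : groupType) (n : nat) (gs : 'I_n -> G)
    (h : G) (A : 'M[F]_n) :=
  forall i j, A i j != 0 -> ((gs i)^-1 * gs j)%g = h.

Definition mu_span (F : fieldType) (n : nat) (S : {set 'I_n * 'I_n}) (A : 'M[F]_n) :=
  forall i j, A i j != 0 -> (i, j) \in S.

(* The span of the matrix units indexed by S is a subalgebra
   (closed under multiplication: e_ij e_jk = e_ik). *)
Definition mu_closed (n : nat) (S : {set 'I_n * 'I_n}) :=
  forall i j k, (i, j) \in S -> (j, k) \in S -> (i, k) \in S.

Definition eval_mx (F : fieldType) (G : groupType) (n : nat)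
    (s : gvar G -> 'M[F]_n) (p : FreeAlg F G) : 'M[F]_n :=
  \sum_(w <- msupp p) p@_w *: \prod_(v <- (w : seq (gvar G))) s v.

(* p is a graded polynomial identity of B = span of e_ij, (i,j) in S, with the
   grading B_h = B \cap M_n(F)_h. *)
Definition graded_identity (F : fieldType) (G : groupType) (n : nat)
    (gs : 'I_n -> G) (S : {set 'I_n * 'I_n}) (p : FreeAlg F G) :=
  forall s : gvar G -> 'M[F]_n,
    (forall v : gvar G, mu_span S (s v) /\ elem_homog gs v.1 (s v)) ->
    eval_mx s p = 0.

Definition infinite_field (F : fieldType) := forall s : seq F, exists x : F, x \notin s.

From HB Require Import structures.
From mathcomp Require Import all_boot all_algebra finmap.
From mathcomp Require Import monalg zify.

Set Implicit Arguments.
Unset Strict Implicit.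
Unset Printing Implicit Defensive.
Import GRing.Theory.
Local Open Scope ring_scope.

(* Since the g_i are distinct, a homogeneous element of B of degree d has at
   most one nonzero entry in row i, in the column j with (i, j) a matrix unit
   of B and g_i^-1 g_j = d.  Hence row i of a product of homogeneous elements
   is carried by the end of the walk from i following the degrees of the
   factors in the graph of matrix units of B, and a monomial is an identity
   iff this walk dies from every vertex, which the 0/1 substitution by sums
   of matrix units detects.
   Reading w letter by letter, the set of vertices whose walk is still alive
   can shrink at most n times.  Cutting w at these letters gives a prefix on
   which no walk dies, followed by at most 2n - 1 blocks (the killing letters
   and the runs between them) after which no walk survives.  As B is closed
   under products, a surviving run behaves like a single edge, so replacing
   each block by one fresh variable of its degree gives a monomial identity m
   of length at most 2n - 1, and w is a graded substitution instance of m
   multiplied by monomials on both sides. *)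

Definition wdeg (G : groupType) (s : seq (gvar G)) : G := (\prod_(v <- s) v.1)%g.

Lemma word_degE (G : groupType) (w : gword G) : word_deg w = wdeg w.
Proof.
rewrite /word_deg /wdeg; elim: (w : seq _) => [|v s IH]; first by rewrite big_nil.
by rewrite big_cons /= IH.
Qed.

Lemma wdeg_cat (G : groupType) (s t : seq (gvar G)) :
  wdeg (s ++ t) = (wdeg s * wdeg t)%g.
Proof. exact: big_cat. Qed.

Section Walks.
Variables (G : groupType) (n : nat) (gs : 'I_n -> G) (S : {set 'I_n * 'I_n}).
Hypothesis gs_inj : injective gs.
Hypothesis S_closed : mu_closed S.

Definition step (d : G) (i : 'I_n) : option 'I_n :=
  [pick j | ((i, j) \in S) && ((gs i)^-1 * gs j == d)%g].

Fixpoint walk (ds : seq G) (i : 'I_n) : option 'I_n :=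
  if ds is d :: ds' then obind (walk ds') (step d i) else Some i.

Lemma stepP d i j : step d i = Some j -> (i, j) \in S /\ ((gs i)^-1 * gs j)%g = d.
Proof. by rewrite /step; case: pickP => // k /andP [Sik /eqP <-] [<-]. Qed.

Lemma step_edge d i j : (i, j) \in S -> ((gs i)^-1 * gs j)%g = d -> step d i = Some j.
Proof.
move=> Sij dij; rewrite /step; case: pickP => [k /andP [_ /eqP dik] | /(_ j)].
  by congr Some; apply: gs_inj; apply: (mulgI (gs i)^-1)%g; rewrite dik dij.
by rewrite Sij dij eqxx.
Qed.

Lemma walk_deg ds i j : walk ds i = Some j -> gs j = (gs i * \prod_(d <- ds) d)%g.
Proof.
elim: ds i => [|d ds IH] i /=; first by case=> ->; rewrite big_nil mulg1.
case Eik: (step d i) => [k|] //= /IH ->.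
by have [_ <-] := stepP Eik; rewrite big_cons mulgA mulVKg.
Qed.

Lemma walk_inj ds i i' j : walk ds i = Some j -> walk ds i' = Some j -> i = i'.
Proof.
move=> /walk_deg Ej /walk_deg E'j; apply: gs_inj.
by apply: (mulIg (\prod_(d <- ds) d)%g); rewrite -Ej -E'j.
Qed.

Lemma walk_edge ds i j : ds != [::] -> walk ds i = Some j -> (i, j) \in S.
Proof.
elim: ds i => [|d ds IH] i //= _; case Eik: (step d i) => [k|] //= Ekj.
have [Sik _] := stepP Eik.
case: ds IH Ekj => [_ [<-] // | d' ds IH Ekj].
exact: S_closed Sik (IH k isT Ekj).
Qed.

Lemma walk_coarse ds i j : ds != [::] -> walk ds i = Some j ->
  step (\prod_(d <- ds) d)%g i = Some j.
Proof.
move=> ds_ne Eij; apply: step_edge; first exact: walk_edge Eij.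
by rewrite (walk_deg Eij) mulKg.
Qed.

Lemma walk_onto ds : (forall i, walk ds i != None) ->
  forall j, exists i, walk ds i = Some j.
Proof.
move=> total j; pose f i := odflt i (walk ds i).
have f_inj : injective f.
  move=> i i'; rewrite /f; move: (total i) (total i').
  case Ei: (walk ds i) => [k|] //; case Ei': (walk ds i') => [k'|] //= _ _ ekk.
  by rewrite ekk in Ei; exact: walk_inj Ei Ei'.
have [g _ gK] := injF_bij f_inj; exists (g j).
by move: (total (g j)) (gK j); rewrite /f; case: (walk ds (g j)) => //= k _ ->.
Qed.

Definition step_image (d : G) (A : {set 'I_n}) : {set 'I_n} :=
  (fun i => odflt i (step d i)) @: [set i in A | step d i != None].

Lemma mem_step_image d (A : {set 'I_n}) i j :
  i \in A -> step d i = Some j -> j \in step_image d A.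
Proof.
by move=> Ai Eij; apply/imsetP; exists i; rewrite ?inE ?Ai ?Eij.
Qed.

Lemma step_imageP d (A : {set 'I_n}) j :
  j \in step_image d A -> exists2 i, i \in A & step d i = Some j.
Proof.
case/imsetP => i; rewrite inE => /andP [Ai].
by case Eik: (step d i) => [k|] //= _ ->; exists i.
Qed.

Lemma card_step_image d (A : {set 'I_n}) : (#|step_image d A| <= #|A|)%N.
Proof.
apply: leq_trans (leq_imset_card _ _) (subset_leq_card _).
by apply/subsetP => i; rewrite inE => /andP [].
Qed.

Lemma card_step_image_lt d (A : {set 'I_n}) i : i \in A -> step d i = None ->
  (#|step_image d A| < #|A|)%N.
Proof.
move=> Ai Ei; apply: leq_ltn_trans (leq_imset_card _ _) (proper_card _).
apply/properP; split; first by apply/subsetP => k; rewrite inE => /andP [].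
by exists i; rewrite // inE Ei andbF.
Qed.

(* An empty block is dropped: as a letter of degree 1 it would need a loop. *)
Definition cons_block (b : seq (gvar G)) bl := if b is [::] then bl else b :: bl.

Lemma flatten_cons_block b bl : flatten (cons_block b bl) = b ++ flatten bl.
Proof. by case: b. Qed.

Lemma size_cons_block b bl : (size (cons_block b bl) <= (size bl).+1)%N.
Proof. by case: b. Qed.

Lemma walk_cons_block b bl i j : walk (map fst b) i = Some j ->
  walk (map (@wdeg G) (cons_block b bl)) i = walk (map (@wdeg G) bl) j.
Proof.
case: b => [[->] // | v b Eij] /=.
by rewrite /wdeg -(big_map fst xpredT id) (walk_coarse _ Eij).
Qed.

Lemma split_dying_word_in u (A : {set 'I_n}) : A != set0 ->
  {in A, forall i, walk (map fst u) i = None} ->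
  exists x bl z, [/\ u = x ++ flatten bl ++ z, (size bl <= 2 * #|A| - 1)%N &
    {in A, forall i, exists2 j, walk (map fst x) i = Some j &
                                walk (map (@wdeg G) bl) j = None}].
Proof.
elim: u A => [|v u IH] A A_ne u_dies; have /set0Pn [i0 Ai0] := A_ne.
  by have := u_dies i0 Ai0.
have A_gt0 : (0 < #|A|)%N by rewrite card_gt0.
set A' := step_image v.1 A.
have A'_dies : {in A', forall k, walk (map fst u) k = None}.
  by move=> k /step_imageP [i Ai Eik]; have := u_dies i Ai; rewrite /= Eik.
have [A'0 | A'_ne] := eqVneq A' set0.
  exists [::], [:: [:: v]], u; split => //=.
    by move: A_gt0; move: #|A| => a; lia.
  move=> i Ai; exists i => //=; rewrite /wdeg big_seq1.
  case Eik: (step v.1 i) => [k|] //.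
  by have := mem_step_image Ai Eik; rewrite -/A' A'0 inE.
have A'_gt0 : (0 < #|A'|)%N by rewrite card_gt0.
have [x [bl [z [Eu size_bl x_bl_dies]]]] := IH A' A'_ne A'_dies.
have [no_death | ] := boolP [forall i in A, step v.1 i != None].
  exists (v :: x), bl, z; split; first by rewrite Eu.
    by move: size_bl (card_step_image v.1 A); move: #|A| #|A'| => a a'; lia.
  move=> i Ai; move/forall_inP: no_death => /(_ i Ai).
  case Eik: (step v.1 i) => [k|] // _.
  have [j Ekj Ej] := x_bl_dies k (mem_step_image Ai Eik).
  by exists j; rewrite //= Eik.
move/forall_inPn => [i1 Ai1]; rewrite negbK => /eqP Ei1.
exists [::], ([:: v] :: cons_block x bl), z; split.
- by rewrite (flatten_cat [:: [:: v]]) flatten_cons_block Eu /= !catA.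
- move: size_bl A'_gt0 (card_step_image_lt Ai1 Ei1) (size_cons_block x bl) => /=.
  by move: #|A| #|A'| (size bl) (size (cons_block x bl)) => a a' s s'; lia.
- move=> i Ai; exists i => //=; rewrite /wdeg big_seq1.
  case Eik: (step v.1 i) => [k|] //=.
  have [j Ekj Ej] := x_bl_dies k (mem_step_image Ai Eik).
  by rewrite (walk_cons_block _ Ekj).
Qed.

Lemma split_dying_word u : (0 < n)%N -> (forall i, walk (map fst u) i = None) ->
  exists x bl z, [/\ u = x ++ flatten bl ++ z, (size bl <= 2 * n - 1)%N &
    forall j, walk (map (@wdeg G) bl) j = None].
Proof.
move=> n_gt0 u_dies.
have setT_ne : [set: 'I_n] != set0 by apply/set0Pn; exists (Ordinal n_gt0).
have [x [bl [z [Eu size_bl x_bl_dies]]]] :=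
  split_dying_word_in setT_ne (in1W u_dies).
exists x, bl, z; split => //; first by rewrite cardsT card_ord in size_bl.
move=> j; have x_total i : walk (map fst x) i != None.
  by have [k -> _] := x_bl_dies i (in_setT i).
have [i Eij] := walk_onto x_total j.
by have [k] := x_bl_dies i (in_setT i); rewrite Eij => -[<-].
Qed.

End Walks.

Section MatrixUnits.
Variables (F : fieldType) (G : groupType) (n : nat) (gs : 'I_n -> G).
Variable S : {set 'I_n * 'I_n}.
Hypothesis gs_inj : injective gs.

Lemma row_homog (A : 'M[F]_n) d i : mu_span S A -> elem_homog gs d A ->
  row i A = if step gs S d i is Some j then A i j *: delta_mx 0 j else 0.
Proof.
move=> A_S A_d; apply/rowP => k; rewrite !mxE.
have step_k : A i k != 0 -> step gs S d i = Some k.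
  by move=> Aik; apply: step_edge => //; [apply: A_S | apply: A_d].
case Eij: (step gs S d i) => [j|]; rewrite !mxE; last first.
  by apply/eqP; apply: contraT => /step_k; rewrite Eij.
have [-> | k_ne_j] := eqVneq k j; first by rewrite eqxx mulr1.
rewrite mulr0; apply/eqP; apply: contraT => /step_k.
by rewrite Eij => -[ejk]; rewrite ejk eqxx in k_ne_j.
Qed.

Lemma row_prod_homog (s : gvar G -> 'M[F]_n) :
  (forall v, mu_span S (s v) /\ elem_homog gs v.1 (s v)) ->
  forall (u : seq (gvar G)) i, exists c : F, row i (\prod_(v <- u) s v) =
    if walk gs S (map fst u) i is Some j then c *: delta_mx 0 j else 0.
Proof.
move=> s_homog; elim=> [|v u IH] i.
  by exists 1; rewrite big_nil /= scale1r rowE mulmx1.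
have [s_S s_d] := s_homog v.
rewrite big_cons -mulmxE row_mul (row_homog i s_S s_d) /=.
case: (step gs S v.1 i) => [k|] /=; last by exists 0; rewrite mul0mx.
have [c Ec] := IH k; exists (s v i k * c).
rewrite -scalemxAl -rowE Ec; case: (walk _ _ _ k) => [j|]; last by rewrite scaler0.
by rewrite scalerA.
Qed.

Definition unit_subst (v : gvar G) : 'M[F]_n :=
  \matrix_(i, j) (((i, j) \in S) && ((gs i)^-1 * gs j == v.1)%g)%:R.

Lemma unit_subst_homog v :
  mu_span S (unit_subst v) /\ elem_homog gs v.1 (unit_subst v).
Proof.
by split=> i j; rewrite mxE; case: andP => [[? /eqP] | _]; rewrite ?eqxx.
Qed.

Lemma row_prod_unit_subst u i : row i (\prod_(v <- u) unit_subst v) =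
  if walk gs S (map fst u) i is Some j then delta_mx 0 j else 0.
Proof.
elim: u i => [|v u IH] i; first by rewrite big_nil rowE mulmx1.
have [s_S s_d] := unit_subst_homog v.
rewrite big_cons -mulmxE row_mul (row_homog i s_S s_d) /=.
case Eik: (step gs S v.1 i) => [k|] /=; last by rewrite mul0mx.
have [Sik dik] := stepP Eik.
by rewrite mxE Sik dik eqxx scale1r -rowE IH.
Qed.

Lemma eval_monomial (s : gvar G -> 'M[F]_n) (w : gword G) :
  eval_mx s (monomial F w) = \prod_(v <- (w : seq (gvar G))) s v.
Proof. by rewrite /eval_mx /monomial msuppU1 big_seq_fset1 mcoeffUU scale1r. Qed.

Lemma monomial_identityP (w : gword G) :
  graded_identity gs S (monomial F w) <-> forall i, walk gs S (map fst w) i = None.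
Proof.
split=> [w_id i | w_dies s s_homog].
  have := w_id _ unit_subst_homog; rewrite eval_monomial => /(congr1 (row i)).
  rewrite row_prod_unit_subst row0; case: (walk _ _ _ i) => [j|] // /rowP /(_ j).
  by rewrite !mxE !eqxx => /eqP; rewrite oner_eq0.
rewrite eval_monomial; apply/row_matrixP => i.
by have [c ->] := row_prod_homog s_homog w i; rewrite w_dies row0.
Qed.

End MatrixUnits.

Lemma monomial_mul (F : fieldType) (G : groupType) (a b : gword G) :
  monomial F a * monomial F b = monomial F (mmul a b).
Proof. by rewrite malgM_def fgmulUU mulr1. Qed.

Section Substitution.
Variables (F : fieldType) (G : groupType) (sig : gvar G -> seq (gvar G)).

Definition subst_word (w : gword G) : gword G := FMonom (flatten (map sig w)).

Definition subst_monom (w : gword G) : FreeAlg F G := monomial F (subst_word w).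

Lemma subst_monom_mmorphism : mmorphism subst_monom.
Proof.
split=> [a b|]; rewrite /subst_monom.
  rewrite monomial_mul; congr monomial.
  by apply: val_inj; rewrite /= !fmM map_cat flatten_cat.
by rewrite /monomial -mpolyC1E; congr << _ >>; apply: val_inj; rewrite /= fm1.
Qed.

HB.instance Definition _ :=
  monalg.isMultiplicative.Build (gword G) (FreeAlg F G) subst_monom subst_monom_mmorphism.

Definition subst_alg (p : FreeAlg F G) : FreeAlg F G :=
  mmap (@malgC (gword G) F) subst_monom p.

Lemma subst_alg_monomial w : subst_alg (monomial F w) = monomial F (subst_word w).
Proof. by rewrite /subst_alg /monomial mmapU mul_malgC scale1r. Qed.

Hypothesis sig_deg : forall v, wdeg (sig v) = v.1.

Lemma word_deg_subst w : word_deg (subst_word w) = word_deg w.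
Proof.
rewrite !word_degE /=; elim: (w : seq _) => [|v s IH] //=.
by rewrite wdeg_cat IH sig_deg /wdeg big_cons.
Qed.

Lemma subst_alg_graded : graded_endo subst_alg.
Proof.
split=> [a p q | p q | | p g p_g].
- by rewrite /subst_alg mmapD mmapZ mul_malgC.
- apply: (commr_mmap_is_multiplicative _).1 => c m m'.
  by rewrite /GRing.comm /= !malgM_def !fgmulUU mulr1 mul1r mul1m mulm1.
- exact: mmap1.
rewrite /subst_alg mmapE big_seq.
apply: (big_ind (fun q : FreeAlg F G => homogeneous q g)).
- by move=> w; rewrite msupp0.
- move=> q q' q_g q'_g w.
  by case/(fsubsetP (msuppD_le _ _))/fsetUP; [apply: q_g | apply: q'_g].
move=> w w_p u.
rewrite mul_malgC => /(fsubsetP (msuppZ_le _ _)).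
by rewrite msuppU1 inE => /eqP ->; rewrite word_deg_subst; apply: p_g.
Qed.

Lemma subst_in_TG_ideal_gen (x z : seq (gvar G)) (m : gword G) :
  in_TG_ideal_gen (fun q => q = monomial F m)
    (monomial F (FMonom (x ++ flatten (map sig m) ++ z))).
Proof.
move=> I [[_ _ _ I_mul] I_endo] I_m.
have := I_mul (monomial F (FMonom x)) _ (monomial F (FMonom z))
  (I_endo _ subst_alg_graded _ (I_m _ erefl)).
rewrite subst_alg_monomial !monomial_mul; congr (I (monomial F _)).
by apply: val_inj; rewrite /= !fmM /= catA.
Qed.

End Substitution.

Section Blocks.
Variables (G : groupType) (bl : seq (seq (gvar G))).

Definition block_word : seq (gvar G) :=
  [seq (wdeg (nth [::] bl k), k) | k <- iota 0 (size bl)].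

Definition block_subst (v : gvar G) : seq (gvar G) :=
  if (v.2 < size bl)%N && (v.1 == wdeg (nth [::] bl v.2)) then nth [::] bl v.2
  else [:: v].

Lemma size_block_word : size block_word = size bl.
Proof. by rewrite size_map size_iota. Qed.

Lemma map_fst_block_word : map fst block_word = map (@wdeg G) bl.
Proof. by rewrite -[in RHS](mkseq_nth [::] bl) /mkseq -!map_comp. Qed.

Lemma wdeg_block_subst v : wdeg (block_subst v) = v.1.
Proof.
rewrite /block_subst; case: ifP => [/andP [_ /eqP ->] // | _].
by rewrite /wdeg big_seq1.
Qed.

Lemma map_block_subst : map block_subst block_word = bl.
Proof.
rewrite -[RHS](mkseq_nth [::] bl) /mkseq -map_comp; apply/eq_in_map => k.
by rewrite mem_iota add0n => /= k_lt; rewrite /block_subst /= k_lt eqxx.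
Qed.

End Blocks.

Theorem mainTheorem2 (F : fieldType) (G : groupType) (n : nat)
    (gs : 'I_n -> G) (S : {set 'I_n * 'I_n}) (w : gword G) :
  infinite_field F ->
  (0 < n)%N ->
  injective gs ->
  mu_closed S ->
  graded_identity gs S (monomial F w) ->
  exists m : gword G,
    [/\ (size (m : seq (gvar G)) <= 2 * n - 1)%N,
        graded_identity gs S (monomial F m) &
        in_TG_ideal_gen (fun q => q = monomial F m) (monomial F w)].
Proof.
(* F need not be infinite for monomial identities. *)
move=> _ n_gt0 gs_inj S_closed /(monomial_identityP F S gs_inj) w_dies.
have [x [bl [z [Ew size_bl bl_dies]]]] := split_dying_word gs_inj S_closed n_gt0 w_dies.
exists (FMonom (block_word bl)); split.
- by rewrite /= size_block_word.
- by apply/(monomial_identityP F S gs_inj) => j /=; rewrite map_fst_block_word.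
have -> : w = FMonom (x ++ flatten (map (block_subst bl) (block_word bl)) ++ z).
  by apply: val_inj; rewrite /= map_block_subst.
exact: (@subst_in_TG_ideal_gen F G _ (wdeg_block_subst bl) x z (FMonom (block_word bl))).
Qed.
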